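(* Let $\mathbf{f}:\mathbb{R}^D\times[0,1]\to\mathbb{R}^D$ and $g:[0,1]\to\mathbb{R}$ be sufficiently regular. Let $q_t$ and $p_t$, $t\in[0,1]$, be positive smooth probability densities on $\mathbb{R}^D$, each solving the Fokker–Planck equation $$\partial_t u=\nabla\cdot\Big(\big(\tfrac12 g(t)^2\nabla\log u-\mathbf{f}(\cdot,t)\big)u\Big)$$ of the SDE $\mathrm{d}\mathbf{z}=\mathbf{f}(\mathbf{z},t)\mathrm{d}t+g(t)\mathrm{d}\mathbf{w}$. Assume enough decay and regularity that differentiation under the integral sign and integration by parts with vanishing boundary terms are valid; for instance, $\log q_t,\log p_t$ smooth with at most polynomial growth at infinity suffices. Assume $q_1=p_1$. Then $$-\int q_0\log p_0\,d\mathbf{z}=\mathcal{H}(q_1)+\int_0^1\mathbb{E}_{\mathbf{z}\sim q_t}\Big[\tfrac12 g(t)^2\|\nabla\log p_t(\mathbf{z})\|_2^2+\mathbf{f}(\mathbf{z},t)^\top\nabla\log q_t(\mathbf{z})-g(t)^2\,\nabla\log q_t(\mathbf{z})^\top\nabla\log p_t(\mathbf{z})\Big]dt,$$ where $\mathcal{H}(q_1)=-\int q_1\log q_1$ is the differential entropy. *)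

From HB Require Import structures.
From mathcomp Require Import all_boot all_order all_algebra.
From mathcomp Require Import all_classical all_reals all_analysis.

Set Implicit Arguments.
Unset Strict Implicit.
Unset Printing Implicit Defensive.
Import Order.TTheory GRing.Theory Num.Def Num.Theory.
Import numFieldNormedType.Exports.

Local Open Scope classical_set_scope.
Local Open Scope ring_scope.

Section Defs.
Context {R : realType} {D : nat}.

Definition RD := 'rV[R]_D.

Definition borelRD : Type := g_sigma_algebraType (@open RD).
HB.instance Definition _ := Measurable.on borelRD.

Definition box (a b : RD) : set RD := [set z | forall i, a 0 i < z 0 i <= b 0 i].

(* mu is (Borel-)Lebesgue measure on R^D: it gives every box its volume.
   (This characterizes Lebesgue measure on the Borel sets uniquely.) *)
Definition is_lebesgue_RD (mu : {measure set borelRD -> \bar R}) : Prop :=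
  forall a b : RD, (forall i, a 0 i <= b 0 i) ->
    mu (box a b : set borelRD) = (\prod_(i < D) (b 0 i - a 0 i))%:E.

Definition partial (i : 'I_D) (h : RD -> R) (z : RD) : R :=
  'D_(delta_mx 0 i : RD) h z.
Definition grad (h : RD -> R) (z : RD) : RD := \row_i partial i h z.
Definition dotRD (u v : RD) : R := \sum_(i < D) u 0 i * v 0 i.
Definition divg (V : RD -> RD) (z : RD) : R :=
  \sum_(i < D) partial i (fun y => V y 0 i) z.

Definition dt (u : RD -> R -> R) (z : RD) (t : R) : R := derive1 (u z) t.

Definition fp_flux (f : RD -> R -> RD) (g : R -> R) (u : RD -> R -> R) (t : R)
  (z : RD) : RD :=
  u z t *: ((2^-1 * g t ^+ 2) *: grad (fun y => ln (u y t)) z - f z t).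

Definition solves_FP (f : RD -> R -> RD) (g : R -> R) (u : RD -> R -> R) : Prop :=
  forall t, t \in `]0, 1[ -> forall z, dt u z t = divg (fp_flux f g u t) z.

Definition smooth_prob_density (mu : {measure set borelRD -> \bar R})
  (u : RD -> R -> R) : Prop :=
  [/\ forall z t, 0 < u z t,
      forall t, t \in `[0, 1] ->
        mu.-integrable [set: borelRD] (fun z : borelRD => (u z t)%:E) /\
        \int[mu]_(z in [set: borelRD]) u z t = 1,
      forall t, t \in `[0, 1] -> forall z, differentiable (u ^~ t) z /\
        forall i, differentiable (partial i (u ^~ t)) z
    & forall t, t \in `]0, 1[ -> forall z, derivable (u z) t 1].

Definition ibp_valid (mu : {measure set borelRD -> \bar R}) (i : 'I_D)
  (v w : RD -> R) : Prop :=
  [/\ mu.-integrable [set: borelRD] (fun z : borelRD => (partial i v z * w z)%:E),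
      mu.-integrable [set: borelRD] (fun z : borelRD => (v z * partial i w z)%:E)
    & \int[mu]_(z in [set: borelRD]) (partial i v z * w z)
      = - \int[mu]_(z in [set: borelRD]) (v z * partial i w z)].

(* Differentiation under the integral sign is valid for H : R^D x R -> R on
   [0,1]:  F(t) := int H(z,t) dz  is defined and continuous on [0,1],
   differentiable on ]0,1[ with  F'(t) = int d_t H(z,t) dz,  and this
   derivative extends continuously to [0,1] (regularity in t). *)
Definition dui_valid (mu : {measure set borelRD -> \bar R})
  (H : RD -> R -> R) : Prop :=
  let F := fun t => \int[mu]_(z in [set: borelRD]) H z t in
  [/\ forall t, t \in `[0, 1] ->
        mu.-integrable [set: borelRD] (fun z : borelRD => (H z t)%:E),
      {within `[0, 1], continuous F},
      forall t, t \in `]0, 1[ ->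
        [/\ mu.-integrable [set: borelRD] (fun z : borelRD => (dt H z t)%:E),
            derivable F t 1
          & derive1 F t = \int[mu]_(z in [set: borelRD]) dt H z t]
    & exists Phi : R -> R, {within `[0, 1], continuous Phi} /\
        forall t, t \in `]0, 1[ -> Phi t = \int[mu]_(z in [set: borelRD]) dt H z t].

Definition expect (mu : {measure set borelRD -> \bar R}) (u : RD -> R -> R)
  (t : R) (phi : RD -> R) : R :=
  \int[mu]_(z in [set: borelRD]) (u z t * phi z).

Definition entropy (mu : {measure set borelRD -> \bar R}) (u : RD -> R) : R :=
  - \int[mu]_(z in [set: borelRD]) (u z * ln (u z)).

End Defs.

Definition sqnorm2 {R : realType} {D : nat} (v : @RD R D) : R := dotRD v v.

From HB Require Import structures.
From mathcomp Require Import all_boot all_order all_algebra.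
From mathcomp Require Import all_classical all_reals all_analysis.
From mathcomp Require Import measurable_realfun.
From mathcomp Require Import ring.
Import Order.TTheory GRing.Theory Num.Def Num.Theory.
Import numFieldNormedType.Exports.
Local Open Scope classical_set_scope.
Local Open Scope ring_scope.

(* Write  F(t) = int q_t log p_t.  The theorem is the fundamental theorem of
   calculus for F on [0,1], combined with the identity
       F'(t) = E_{q_t}[ 1/2 g^2 |grad log p_t|^2 + f . grad log q_t
                        - g^2 grad log q_t . grad log p_t ]          (star)
   for t in ]0,1[, and with  -F(1) = H(q_1)  (because q_1 = p_1).
   To prove (star), differentiate under the integral sign and use both
   Fokker--Planck equations:  d_t(q log p) = div(J_q) log p + div(J_p) q/p,
   where J_u is the probability flux of u.  Integrating by parts in every
   coordinate turns this into  - J_q . grad log p - J_p . grad(q/p), and a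
   pointwise computation identifies the latter with q times the integrand
   of (star). *)

Section FiniteSumsOfIntegrals.
Context {d} {T : measurableType d} {R : realType}.
Context {mu : {measure set T -> \bar R}} {A : set T} (mA : measurable A).

Lemma integrable_Rsum (I : Type) (s : seq I) (h : I -> T -> R) :
  (forall i, mu.-integrable A (EFin \o h i)) ->
  mu.-integrable A (fun x => (\sum_(i <- s) h i x)%:E).
Proof.
move=> ih; under eq_fun do rewrite -sumEFin.
by apply: (integrable_sum mA) => i _; exact: ih.
Qed.

Lemma Rintegral_sum (I : Type) (s : seq I) (h : I -> T -> R) :
  (forall i, mu.-integrable A (EFin \o h i)) ->
  \int[mu]_(x in A) (\sum_(i <- s) h i x) = \sum_(i <- s) \int[mu]_(x in A) h i x.
Proof.
move=> ih; rewrite /Rintegral; under eq_integral do rewrite -sumEFin.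
rewrite (integral_sum mA) // -sum_fine // => i _.
exact: integrable_fin_num (ih i).
Qed.

Lemma integrableD_EFin (h k : T -> R) :
  mu.-integrable A (EFin \o h) -> mu.-integrable A (EFin \o k) ->
  mu.-integrable A (fun x => (h x + k x)%:E).
Proof.
move=> ih ik; apply: (eq_integrable mA ((EFin \o h) \+ (EFin \o k))) => //.
exact: integrableD.
Qed.

Lemma RintegralN (h : T -> R) : mu.-integrable A (EFin \o h) ->
  \int[mu]_(x in A) (- h x) = - \int[mu]_(x in A) h x.
Proof.
move=> ih; rewrite -mulN1r -RintegralZl //.
by apply: eq_Rintegral => x _; rewrite mulN1r.
Qed.

End FiniteSumsOfIntegrals.

Section SegmentIntegrals.
Context {R : realType}.
Notation leb := (@lebesgue_measure R).
Context {a b : R} (ab : a < b).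

Lemma itv_cc_split : `[a, b]%classic = `]a, b[%classic `|` ([set a] `|` [set b]).
Proof.
apply/seteqP; split => x /=; rewrite !in_itv /=.
  move=> /andP[]; rewrite !le_eqVlt => /predU1P[<-|ax] /predU1P[->|xb];
    by [right; left | right; right | left; rewrite ax xb].
move=> [/andP[/ltW -> /ltW ->]|[->|->]] //.
  by rewrite lexx ltW.
by rewrite lexx ltW.
Qed.

Lemma measurable_fun_itv_cc_interior {g h : R -> R} :
  measurable_fun `[a, b] h -> {in `]a, b[, g =1 h} -> measurable_fun `[a, b] g.
Proof.
move=> mh gh; rewrite itv_cc_split.
have mab : measurable ([set a] `|` [set b]) by apply: measurableU.
apply/(measurable_funU g (measurable_itv _) mab); split.
  apply: (eq_measurable_fun h) => [t /set_mem tI|]; first by rewrite gh.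
  by apply: measurable_funS mh => //; apply: subset_itv_oo_cc.
apply/(measurable_funU g (measurable_set1 a) (measurable_set1 b)).
by split; exact: measurable_fun_set1.
Qed.

Lemma integral_itv_cc_oo (g : R -> R) : measurable_fun `[a, b] g ->
  (\int[leb]_(t in `[a, b]) (g t)%:E = \int[leb]_(t in `]a, b[) (g t)%:E)%E.
Proof.
move=> mg.
rewrite -integral_itv_bndo_bndc; last first.
  apply/measurable_EFinP; apply: measurable_funS mg => //.
  by apply: subset_itvl; rewrite bnd_simp.
rewrite -integral_itv_obnd_cbnd //.
by apply/measurable_EFinP; apply: measurable_funS mg => //; apply: subset_itv_oo_cc.
Qed.

(* The integrand of the theorem is only known to
   agree with a continuous function on the open interval. *)
Lemma Rintegral_itv_cc_interior {g h : R -> R} : {within `[a, b], continuous h} ->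
  {in `]a, b[, g =1 h} ->
  \int[leb]_(t in `[a, b]) g t = \int[leb]_(t in `[a, b]) h t.
Proof.
move=> ch gh.
have mh : measurable_fun `[a, b] h.
  apply/measurable_EFinP; apply: (measurable_int leb).
  by apply: continuous_compact_integrable => //; exact: segment_compact.
have mg := measurable_fun_itv_cc_interior mh gh.
rewrite /Rintegral integral_itv_cc_oo // integral_itv_cc_oo //; congr fine.
by apply: eq_integral => t /set_mem tI; rewrite gh.
Qed.

Lemma Rintegral_itv_FTC {F Phi : R -> R} : {within `[a, b], continuous F} ->
  {within `[a, b], continuous Phi} ->
  {in `]a, b[, forall t, derivable F t 1 /\ derive1 F t = Phi t} ->
  \int[leb]_(t in `[a, b]) Phi t = F b - F a.
Proof.
move=> cF cPhi dF.
have [_ Fa Fb] := (continuous_within_itvP F ab).1 cF.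
rewrite /Rintegral (continuous_FTC2 (F := F) ab cPhi) //.
  by split => // t /dF [].
by move=> t /dF [].
Qed.

End SegmentIntegrals.

Section Calculus.
Context {R : realType}.

Lemma ln_differentiable {x : R} : 0 < x -> differentiable (@ln R) x.
Proof. by move=> x0; apply/derivable1_diffP; apply: ex_derive; exact: is_derive1_ln. Qed.

Lemma diff_ln (x w : R) : 0 < x -> 'd (@ln R) x w = w / x.
Proof.
move=> x0; have dl := ln_differentiable x0.
rewrite -[w]mulr1 -[w * 1]/(w *: (1 : R)) linearZ /= -derive1E' //.
by rewrite derive1E; have [_ ->] := is_derive1_ln x0; rewrite /GRing.scale /= mulr1.
Qed.

Lemma derive1_mul_ln (u v : R -> R) (t : R) :
  derivable u t 1 -> derivable v t 1 -> 0 < v t ->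
  derive1 (fun s => u s * ln (v s)) t
  = derive1 u t * ln (v t) + u t * (derive1 v t / v t).
Proof.
move=> du dv v0.
have dlnv : derivable (@ln R \o v) t 1.
  apply/derivable1_diffP; apply: differentiable_comp; last exact: ln_differentiable.
  exact/derivable1_diffP.
have chain : derive1 (@ln R \o v) t = (v t)^-1 * derive1 v t.
  rewrite (derive1_comp dv (proj2 (derivable1_diffP _ _) (ln_differentiable v0))).
  by rewrite derive1E; have [_ ->] := is_derive1_ln v0.
rewrite (_ : (fun s => u s * ln (v s)) = u * (@ln R \o v)) //.
rewrite derive1E (deriveM du dlnv) -!derive1E chain.
by rewrite /comp /GRing.scale /=; ring.
Qed.

Context {D : nat}.

Lemma partial_ln (h : @RD R D -> R) i z : differentiable h z -> 0 < h z ->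
  partial i (fun y => ln (h y)) z = partial i h z / h z.
Proof.
move=> dh h0; rewrite /partial (_ : (fun y => ln (h y)) = (@ln R) \o h) //.
rewrite deriveE; last exact: differentiable_comp (ln_differentiable h0).
by rewrite diff_comp //= ?diff_ln // -?deriveE //; exact: ln_differentiable.
Qed.

Lemma partial_div (h k : @RD R D -> R) i z :
  differentiable h z -> differentiable k z -> k z != 0 ->
  partial i (fun y => h y / k y) z
  = (partial i h z * k z - h z * partial i k z) / k z ^+ 2.
Proof.
move=> dh dk k0.
have dh' := @diff_derivable _ _ _ h z (delta_mx 0 i : RD) dh.
have dk' := @diff_derivable _ _ _ k z (delta_mx 0 i : RD) dk.
rewrite /partial (_ : (fun y => h y / k y) = h * (fun y => (k y)^-1)) //.
rewrite deriveM //; last exact: derivableV.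
rewrite deriveV // /GRing.scale /=.
move: k0 (h z) ('D_ _ h z) ('D_ _ k z); move: (k z) => c c0 x dx dc.
by field.
Qed.

End Calculus.

Section FokkerPlanckIdentity.
Context {R : realType} {D : nat}.
Variable mu : {measure set (@borelRD R D) -> \bar R}.
Variables (f : @RD R D -> R -> @RD R D) (g : R -> R) (q p : @RD R D -> R -> R).
Variable t : R.

Definition ce_integrand (z : @RD R D) : R :=
  2^-1 * g t ^+ 2 * sqnorm2 (grad (fun y => ln (p y t)) z)
  + dotRD (f z t) (grad (fun y => ln (q y t)) z)
  - g t ^+ 2 * dotRD (grad (fun y => ln (q y t)) z) (grad (fun y => ln (p y t)) z).

Definition flux_q (i : 'I_D) (z : @RD R D) : R := fp_flux f g q t z 0 i.
Definition flux_p (i : 'I_D) (z : @RD R D) : R := fp_flux f g p t z 0 i.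

Hypothesis q_pos : forall z, 0 < q z t.
Hypothesis p_pos : forall z, 0 < p z t.
Hypothesis q_diff : forall z, differentiable (q ^~ t) z.
Hypothesis p_diff : forall z, differentiable (p ^~ t) z.

Lemma ce_integrand_flux (z : @RD R D) :
  q z t * ce_integrand z
  = - \sum_(i < D) (flux_q i z * partial i (fun y => ln (p y t)) z
                   + flux_p i z * partial i (fun y => q y t / p y t) z).
Proof.
rewrite /ce_integrand /sqnorm2 /dotRD -sumrN.
set a := fun i => grad (fun y => ln (p y t)) z 0 i.
set b := fun i => grad (fun y => ln (q y t)) z 0 i.
transitivity (\sum_(i < D) q z t *
  (2^-1 * g t ^+ 2 * (a i * a i) + f z t 0 i * b i - g t ^+ 2 * (b i * a i))).
  by rewrite -mulr_sumr sumrB big_split /= -!mulr_sumr.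
apply: eq_bigr => i _; rewrite {}/a {}/b.
rewrite /flux_q /flux_p /fp_flux /grad !mxE.
rewrite partial_div ?(lt0r_neq0 (p_pos z)) // !partial_ln //.
move: (lt0r_neq0 (q_pos z)) (lt0r_neq0 (p_pos z)).
move: (partial i (q ^~ t) z) (partial i (p ^~ t) z) (f z t 0 i) (g t) (q z t) (p z t).
by move=> dq dp fi gt qz pz qz0 pz0; field; rewrite qz0 pz0.
Qed.

Hypothesis q_derivable : forall z, derivable (q z) t 1.
Hypothesis p_derivable : forall z, derivable (p z) t 1.
Hypothesis q_FP : forall z, dt q z t = divg (fp_flux f g q t) z.
Hypothesis p_FP : forall z, dt p z t = divg (fp_flux f g p t) z.

Lemma dt_qlnp_flux (z : @RD R D) :
  dt (fun z s => q z s * ln (p z s)) z t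
  = \sum_(i < D) (partial i (flux_q i) z * ln (p z t)
                 + partial i (flux_p i) z * (q z t / p z t)).
Proof.
rewrite /dt /= derive1_mul_ln //.
have -> : derive1 (q z) t = divg (fp_flux f g q t) z := q_FP z.
have -> : derive1 (p z) t = divg (fp_flux f g p t) z := p_FP z.
rewrite big_split /=; congr (_ + _).
  by rewrite /divg mulr_suml.
by rewrite /divg mulrCA mulr_suml.
Qed.

Hypothesis ibp : forall i,
  ibp_valid mu i (flux_q i) (fun z => ln (p z t)) /\
  ibp_valid mu i (flux_p i) (fun z => q z t / p z t).

(* (star): integrating by parts in every coordinate matches the two
   pointwise expressions above. *)
Lemma expect_ce_integrand :
  expect mu q t ce_integrand
  = \int[mu]_(z in [set: borelRD]) dt (fun z s => q z s * ln (p z s)) z t.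
Proof.
pose C i z := flux_q i z * partial i (fun y => ln (p y t)) z
              + flux_p i z * partial i (fun y => q y t / p y t) z.
pose A i z := partial i (flux_q i) z * ln (p z t)
              + partial i (flux_p i) z * (q z t / p z t).
have intC i : mu.-integrable [set: borelRD] (EFin \o C i).
  by have [[_ ? _] [_ ? _]] := ibp i; exact: (integrableD_EFin measurableT).
have intA i : mu.-integrable [set: borelRD] (EFin \o A i).
  by have [[? _ _] [? _ _]] := ibp i; exact: (integrableD_EFin measurableT).
have ibpA i : \int[mu]_(z in [set: borelRD]) A i z
              = - \int[mu]_(z in [set: borelRD]) C i z.
  have [[? ? eq] [? ? ep]] := ibp i.
  by rewrite !RintegralD // eq ep opprD.
rewrite /expect; under eq_Rintegral do rewrite ce_integrand_flux.
rewrite (RintegralN measurableT); last exact: (integrable_Rsum measurableT).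
under [RHS]eq_Rintegral do rewrite dt_qlnp_flux.
rewrite !(Rintegral_sum measurableT) // -sumrN.
by apply: eq_bigr => i _; rewrite ibpA.
Qed.

End FokkerPlanckIdentity.

Theorem mainTheorem2 (R : realType) (D : nat)
  (mu : {measure set (@borelRD R D) -> \bar R})
  (f : @RD R D -> R -> @RD R D) (g : R -> R) (q p : @RD R D -> R -> R) :
  is_lebesgue_RD mu ->
  (forall t z, differentiable (f ^~ t) z) ->
  smooth_prob_density mu q ->
  smooth_prob_density mu p ->
  solves_FP f g q ->
  solves_FP f g p ->
  (forall t, t \in `]0, 1[ -> forall i,
     ibp_valid mu i (fun z => fp_flux f g q t z 0 i) (fun z => ln (p z t)) /\
     ibp_valid mu i (fun z => fp_flux f g p t z 0 i) (fun z => q z t / p z t)) ->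
  dui_valid mu (fun z t => q z t * ln (p z t)) ->
  (forall z, q z 1 = p z 1) ->
  - (\int[mu]_(z in [set: borelRD]) (q z 0 * ln (p z 0)))
  = entropy mu (q ^~ 1)
    + \int[@lebesgue_measure R]_(t in `[0, 1])
        expect mu q t (fun z =>
            2^-1 * g t ^+ 2 * sqnorm2 (grad (fun y => ln (p y t)) z)
          + dotRD (f z t) (grad (fun y => ln (q y t)) z)
          - g t ^+ 2 * dotRD (grad (fun y => ln (q y t)) z)
                             (grad (fun y => ln (p y t)) z)).
Proof.
move=> _ _ [q_pos _ q_reg q_dt] [p_pos _ p_reg p_dt] q_FP p_FP ibp.
move=> [_ F_cont F_der [Phi [Phi_cont Phi_eq]]] q1p1.
pose F t := \int[mu]_(z in [set: borelRD]) (q z t * ln (p z t)).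
have rate : {in `]0, 1[, (fun t => expect mu q t (ce_integrand f g q p t)) =1 Phi}.
  move=> t t01; have t01c := subset_itv_oo_cc t01; rewrite Phi_eq //.
  apply: expect_ce_integrand => [z|z|z|z|z|z|z|z|i].
  - exact: q_pos.
  - exact: p_pos.
  - exact: (q_reg t t01c z).1.
  - exact: (p_reg t t01c z).1.
  - exact: q_dt.
  - exact: p_dt.
  - exact: q_FP.
  - exact: p_FP.
  - exact: ibp.
rewrite (Rintegral_itv_cc_interior ltr01 Phi_cont rate).
rewrite (Rintegral_itv_FTC ltr01 F_cont Phi_cont) => [|t t01]; last first.
  by have [_ ? ->] := F_der t t01; rewrite Phi_eq.
have -> : entropy mu (q ^~ 1) = - F 1.
  by rewrite /entropy; congr (- _); apply: eq_Rintegral => z _; rewrite q1p1.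
by rewrite addKr.
Qed.
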